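(* Let $\Omega\subseteq\mathbb{R}^n$ be open and let $\mathbb{H}_{nf}(\Omega)$ be the set of all nearly finite H-continuous interval functions on $\Omega$, ordered by $\le$. Then $\mathbb{H}_{nf}(\Omega)$ is Dedekind order complete: (a) if $\mathcal{F}$ is a nonempty subset of $\mathbb{H}_{nf}(\Omega)$ which is bounded from above in $\mathbb{H}_{nf}(\Omega)$, then there exists $u\in\mathbb{H}_{nf}(\Omega)$ with $u=\sup\mathcal{F}$; (b) if $\mathcal{F}$ is a nonempty subset of $\mathbb{H}_{nf}(\Omega)$ which is bounded from below in $\mathbb{H}_{nf}(\Omega)$, then there exists $v\in\mathbb{H}_{nf}(\Omega)$ with $v=\inf\mathcal{F}$.
   Context: $\overline{\mathbb{R}}=\mathbb{R}\cup\{\pm\infty\}$, $\mathbb{I}\overline{\mathbb{R}}$ is the set of closed intervals $[\underline a,\overline a]$ with $\underline a\le\overline a$ in $\overline{\mathbb{R}}$, $a\in\overline{\mathbb{R}}$ identified with $[a,a]$. $\mathbb{A}(\Omega)$ is the set of functions $\Omega\to\mathbb{I}\overline{\mathbb{R}}$. Order: $[\underline a,\overline a]\le[\underline b,\overline b]$ iff $\underline a\le\underline b$ and $\overline a\le\overline b$; $f\le g$ iff $f(x)\le g(x)$ for all $x\in\Omega$. $f$ is nearly finite if there is an open dense subset $D$ of $\Omega$ such that $f(x)$ has both endpoints real for all $x\in D$. $B_\delta(x)=\{y\in\Omega:\|x-y\|<\delta\}$. For $f\in\mathbb{A}(\Omega)$: $I(f)(x)=\sup_{\delta>0}\inf\{z\in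 f(y):y\in B_\delta(x)\}$, $S(f)(x)=\inf_{\delta>0}\sup\{z\in f(y):y\in B_\delta(x)\}$, $F(f)(x)=[I(f)(x),S(f)(x)]$. $f$ is H-continuous if for every $g\in\mathbb{A}(\Omega)$ with $g(x)\subseteq f(x)$ for all $x$ one has $F(g)=f$. *)

From HB Require Import structures.
From mathcomp Require Import all_boot all_order all_algebra.
From mathcomp Require Import all_classical all_reals all_analysis.
Set Implicit Arguments. Unset Strict Implicit. Unset Printing Implicit Defensive.
Import Order.TTheory GRing.Theory Num.Theory.
Import numFieldNormedType.Exports.
Local Open Scope classical_set_scope.
Local Open Scope ring_scope.

Section Defs.
Variables (R : realType) (n : nat).

(* An interval [a.1, a.2] of extended reals is represented by its endpoints. *)
Definition ifun := 'rV[R]_n -> (\bar R * \bar R).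

(* f is an element of A(Omega): on Omega, f(x) is a closed interval (lo <= hi).
   Values outside Omega are irrelevant. *)
Definition is_ifun (Om : set 'rV[R]_n) (f : ifun) :=
  forall x, Om x -> ((f x).1 <= (f x).2)%E.

Definition ile (Om : set 'rV[R]_n) (f g : ifun) :=
  forall x, Om x -> ((f x).1 <= (g x).1)%E /\ ((f x).2 <= (g x).2)%E.

Definition Bd (Om : set 'rV[R]_n) (d : R) (x : 'rV[R]_n) :=
  [set y | Om y /\ `|x - y| < d].

Definition vals (f : ifun) (B : set 'rV[R]_n) :=
  [set z : \bar R | exists2 y, B y & ((f y).1 <= z)%E /\ (z <= (f y).2)%E].

Definition Ilow (Om : set 'rV[R]_n) (f : ifun) (x : 'rV[R]_n) : \bar R :=
  ereal_sup [set ereal_inf (vals f (Bd Om d x)) | d in [set d : R | 0 < d]].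

Definition Supp (Om : set 'rV[R]_n) (f : ifun) (x : 'rV[R]_n) : \bar R :=
  ereal_inf [set ereal_sup (vals f (Bd Om d x)) | d in [set d : R | 0 < d]].

Definition Fop (Om : set 'rV[R]_n) (f : ifun) : ifun :=
  fun x => (Ilow Om f x, Supp Om f x).

Definition isub (Om : set 'rV[R]_n) (g f : ifun) :=
  forall x, Om x -> ((f x).1 <= (g x).1)%E /\ ((g x).2 <= (f x).2)%E.

Definition Hcont (Om : set 'rV[R]_n) (f : ifun) :=
  is_ifun Om f /\
  forall g : ifun, is_ifun Om g -> isub Om g f ->
    forall x, Om x -> Fop Om g x = f x.

Definition nearly_finite (Om : set 'rV[R]_n) (f : ifun) :=
  exists D : set 'rV[R]_n,
    [/\ open D, D `<=` Om,
        (forall x, Om x -> forall e : R, 0 < e -> exists2 y, D y & `|x - y| < e)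
      & forall x, D x -> (f x).1 \is a fin_num /\ (f x).2 \is a fin_num].

Definition Hnf (Om : set 'rV[R]_n) (f : ifun) := Hcont Om f /\ nearly_finite Om f.

Definition is_sup_Hnf (Om : set 'rV[R]_n) (F : set ifun) (u : ifun) :=
  [/\ Hnf Om u, (forall f, F f -> ile Om f u)
    & forall w, Hnf Om w -> (forall f, F f -> ile Om f w) -> ile Om u w].

Definition is_inf_Hnf (Om : set 'rV[R]_n) (F : set ifun) (v : ifun) :=
  [/\ Hnf Om v, (forall f, F f -> ile Om v f)
    & forall w, Hnf Om w -> (forall f, F f -> ile Om w f) -> ile Om w v].

End Defs.

From mathcomp Require Import all_boot all_order all_algebra.
From mathcomp Require Import all_classical all_reals all_analysis.
Import Order.TTheory GRing.Theory Num.Theory.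
Import numFieldNormedType.Exports.
Local Open Scope classical_set_scope.
Local Open Scope ring_scope.
Set Implicit Arguments. Unset Strict Implicit.

(* Write I(h), S(h) for the Baire envelopes of a point-valued function h.
   An interval function f is H-continuous exactly when I(f.2) = f.1 and
   S(f.1) = f.2, because I and S are monotone and idempotent.  For a family F
   of such functions put phi = sup_F f.1; each f.1 = I(S(f.1)) lies below
   I(S(phi)), so phi <= I(S(phi)), which makes (I(S(phi)), S(phi)) H-continuous;
   it is an upper bound of F, and below every H-continuous upper bound w since
   phi <= w.1 gives S(phi) <= S(w.1) = w.2 and I(S(phi)) <= I(w.2) = w.1.
   Being squeezed between a member of F and a nearly finite upper bound, it is
   nearly finite.  The infimum is dual, starting from psi = inf_F f.2. *)

Section BaireOperators.
Variables (R : realType) (n : nat) (Om : set 'rV[R]_n).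

Definition degen (h : 'rV[R]_n -> \bar R) : ifun R n := fun y => (h y, h y).

Definition lbaire h := Ilow Om (degen h).
Definition ubaire h := Supp Om (degen h).

Lemma degen_ifun h : is_ifun Om (degen h).
Proof. by move=> x _. Qed.

Lemma Bd_center d x : Om x -> 0 < d -> Bd Om d x x.
Proof. by move=> Ox d0; split => //; rewrite subrr normr0. Qed.

Lemma Bd_half d x y : Bd Om (d / 2) x y -> Bd Om (d / 2) y `<=` Bd Om d x.
Proof.
move=> [_ xy] z [Oz yz]; split => //.
by apply: le_lt_trans (ler_distD y x z) _; rewrite [d]splitr ltrD.
Qed.

Lemma Ilow_mono (f g : ifun R n) x : is_ifun Om f ->
  (forall y, Om y -> ((f y).1 <= (g y).1)%E) -> (Ilow Om f x <= Ilow Om g x)%E.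
Proof.
move=> fi fg; apply: ge_ereal_sup => _ [d d0 <-].
apply: le_ereal_sup_tmp; exists (ereal_inf (vals g (Bd Om d x))); first by exists d.
apply: le_ereal_inf_tmp => z [y By [gz _]].
apply: le_trans (le_trans (fg y By.1) gz).
by apply: ereal_inf_lbound; exists y => //; split => //; exact: fi y By.1.
Qed.

Lemma Supp_mono (f g : ifun R n) x : is_ifun Om g ->
  (forall y, Om y -> ((f y).2 <= (g y).2)%E) -> (Supp Om f x <= Supp Om g x)%E.
Proof.
move=> gi fg; apply: le_ereal_inf_tmp => _ [d d0 <-].
apply: (@le_trans _ _ (ereal_sup (vals f (Bd Om d x)))).
  by apply: ereal_inf_lbound; exists d.
apply: ge_ereal_sup => z [y By [_ fz]].
apply: le_trans (le_trans fz (fg y By.1)) _.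
by apply: ereal_sup_ubound; exists y => //; split => //; exact: gi y By.1.
Qed.

Lemma lbaire_mono h k x :
  (forall y, Om y -> (h y <= k y)%E) -> (lbaire h x <= lbaire k x)%E.
Proof. exact: (@Ilow_mono (degen h) (degen k) x (degen_ifun h)). Qed.

Lemma ubaire_mono h k x :
  (forall y, Om y -> (h y <= k y)%E) -> (ubaire h x <= ubaire k x)%E.
Proof. exact: (@Supp_mono (degen h) (degen k) x (degen_ifun k)). Qed.

Lemma Ilow_lbaire (f : ifun R n) x :
  is_ifun Om f -> Ilow Om f x = lbaire (fst \o f) x.
Proof.
move=> fi; apply/le_anti/andP; split; first exact: Ilow_mono.
exact: Ilow_mono (degen_ifun _) _.
Qed.

Lemma Supp_ubaire (f : ifun R n) x :
  is_ifun Om f -> Supp Om f x = ubaire (snd \o f) x.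
Proof.
move=> fi; apply/le_anti/andP; split; first exact: Supp_mono (degen_ifun _) _.
exact: Supp_mono.
Qed.

Lemma lbaire_le h x : Om x -> (lbaire h x <= h x)%E.
Proof.
move=> Ox; apply: ge_ereal_sup => _ [d d0 <-].
by apply: ereal_inf_lbound; exists x; [exact: Bd_center | split].
Qed.

Lemma ubaire_ge h x : Om x -> (h x <= ubaire h x)%E.
Proof.
move=> Ox; apply: le_ereal_inf_tmp => _ [d d0 <-].
by apply: ereal_sup_ubound; exists x; [exact: Bd_center | split].
Qed.

Lemma lbaire_idem h x : (lbaire h x <= lbaire (lbaire h) x)%E.
Proof.
apply: ge_ereal_sup => _ [d d0 <-].
have d20 : 0 < d / 2 by rewrite divr_gt0.
apply: le_ereal_sup_tmp.
exists (ereal_inf (vals (degen (lbaire h)) (Bd Om (d / 2) x))); first by exists (d / 2).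
apply: le_ereal_inf_tmp => z [y xy [hz _]]; apply: le_trans hz => /=.
apply: le_ereal_sup_tmp; exists (ereal_inf (vals (degen h) (Bd Om (d / 2) y))).
  by exists (d / 2).
by apply: ereal_inf_le_tmp => w [y' yy' hw]; exists y' => //; exact: Bd_half yy'.
Qed.

Lemma ubaire_idem h x : (ubaire (ubaire h) x <= ubaire h x)%E.
Proof.
apply: le_ereal_inf_tmp => _ [d d0 <-].
have d20 : 0 < d / 2 by rewrite divr_gt0.
apply: (@le_trans _ _ (ereal_sup (vals (degen (ubaire h)) (Bd Om (d / 2) x)))).
  by apply: ereal_inf_lbound; exists (d / 2).
apply: ge_ereal_sup => z [y xy [_ hz]]; apply: le_trans hz _ => /=.
apply: (@le_trans _ _ (ereal_sup (vals (degen h) (Bd Om (d / 2) y)))).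
  by apply: ereal_inf_lbound; exists (d / 2).
by apply: ereal_sup_le => w [y' yy' hw]; exists y' => //; exact: Bd_half yy'.
Qed.

Lemma HcontP (f : ifun R n) :
  Hcont Om f <-> is_ifun Om f /\
    forall x, Om x -> lbaire (snd \o f) x = (f x).1 /\ ubaire (fst \o f) x = (f x).2.
Proof.
split=> [[fi fH]|[fi fE]].
  split=> // x Ox.
  have hi := congr1 snd (fH _ (degen_ifun (fst \o f))
    (fun y Oy => conj (lexx _) (fi y Oy)) x Ox).
  have lo := congr1 fst (fH _ (degen_ifun (snd \o f))
    (fun y Oy => conj (fi y Oy) (lexx _)) x Ox).
  by split; [exact: lo | exact: hi].
split=> // g gi gsub x Ox; have [lo hi] := fE x Ox.
rewrite /Fop Ilow_lbaire // Supp_ubaire //; apply: injective_projections => /=.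
  apply/le_anti/andP; split; rewrite -lo.
    apply: lbaire_mono => y Oy; have [_ gf] := gsub y Oy.
    exact: le_trans (gi y Oy) gf.
  apply: le_trans (lbaire_idem _ _) _; apply: lbaire_mono => y Oy.
  by rewrite (fE y Oy).1; case: (gsub y Oy).
apply/le_anti/andP; split; rewrite -hi.
  apply: le_trans (ubaire_idem _ _); apply: ubaire_mono => y Oy.
  by rewrite (fE y Oy).2; case: (gsub y Oy).
apply: ubaire_mono => y Oy; have [fg _] := gsub y Oy.
exact: le_trans fg (gi y Oy).
Qed.

Lemma Hcont_lbaire_ubaire h :
  (forall x, Om x -> (h x <= lbaire (ubaire h) x)%E) ->
  Hcont Om (fun x => (lbaire (ubaire h) x, ubaire h x)).
Proof.
move=> h_le; apply/HcontP; split=> [x Ox|x Ox]; first exact: lbaire_le.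
split=> //; apply/le_anti/andP; split; last exact: ubaire_mono.
apply: le_trans (ubaire_idem h x); apply: ubaire_mono => y Oy; exact: lbaire_le.
Qed.

Lemma Hcont_ubaire_lbaire h :
  (forall x, Om x -> (ubaire (lbaire h) x <= h x)%E) ->
  Hcont Om (fun x => (lbaire h x, ubaire (lbaire h) x)).
Proof.
move=> h_ge; apply/HcontP; split=> [x Ox|x Ox]; first exact: ubaire_ge.
split=> //; apply/le_anti/andP; split; first exact: lbaire_mono.
apply: le_trans (lbaire_idem h x) _; apply: lbaire_mono => y Oy; exact: ubaire_ge.
Qed.

End BaireOperators.

Section NearlyFinite.
Variables (R : realType) (n : nat) (Om : set 'rV[R]_n).

Definition dense_in (D : set 'rV[R]_n) :=
  forall x, Om x -> forall e : R, 0 < e -> exists2 y, D y & `|x - y| < e.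

Lemma dense_inI D1 D2 : open D1 -> D1 `<=` Om ->
  dense_in D1 -> dense_in D2 -> dense_in (D1 `&` D2).
Proof.
move=> oD1 D1Om d1 d2 x Ox e e0.
have e20 : 0 < e / 2 by rewrite divr_gt0.
have [y D1y xy] := d1 x Ox _ e20.
have [r r0 yD1] : exists2 r : R, 0 < r & forall z, `|y - z| < r -> D1 z.
  move: (oD1 y D1y); rewrite /= nbhs_ballP => -[r r0 yD1].
  by exists r => // z yz; apply: yD1; rewrite -ball_normE.
have m0 : 0 < Order.min r (e / 2) by rewrite lt_min r0 e20.
have [z D2z yz] := d2 y (D1Om _ D1y) _ m0.
move: yz; rewrite lt_min => /andP[yzr yze].
exists z; first by split => //; exact: yD1.
by apply: le_lt_trans (ler_distD y x z) _; rewrite [e]splitr ltrD.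
Qed.

Lemma fin_num_between (a b c : \bar R) : a \is a fin_num -> c \is a fin_num ->
  (a <= b)%E -> (b <= c)%E -> b \is a fin_num.
Proof.
rewrite !fin_numElt => /andP[a1 _] /andP[_ c2] ab bc.
by rewrite (lt_le_trans a1 ab) (le_lt_trans bc c2).
Qed.

Lemma nearly_finite_between (f u w : ifun R n) :
  nearly_finite Om f -> nearly_finite Om w -> is_ifun Om u ->
  ile Om f u -> ile Om u w -> nearly_finite Om u.
Proof.
move=> [D1 [oD1 D1Om d1 fD1]] [D2 [oD2 D2Om d2 wD2]] ui fu uw.
exists (D1 `&` D2); split; first exact: openI.
- by move=> y [/D1Om].
- exact: dense_inI.
move=> y [D1y D2y]; have Oy := D1Om _ D1y.
have [[f1 _] [_ w2]] := (fD1 y D1y, wD2 y D2y).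
have [[fu1 _] [_ uw2]] := (fu y Oy, uw y Oy).
have u2 := le_trans (ui y Oy) uw2; have u1 := le_trans fu1 (ui y Oy).
by split; [exact: fin_num_between f1 w2 fu1 u2 | exact: fin_num_between f1 w2 u1 uw2].
Qed.

End NearlyFinite.

Section SupInf.
Variables (R : realType) (n : nat) (Om : set 'rV[R]_n) (F : set (ifun R n)).

Definition sup_lo x := ereal_sup [set (f x).1 | f in F].
Definition inf_hi x := ereal_inf [set (f x).2 | f in F].

Definition Hsup : ifun R n :=
  fun x => (lbaire Om (ubaire Om sup_lo) x, ubaire Om sup_lo x).
Definition Hinf : ifun R n :=
  fun x => (lbaire Om inf_hi x, ubaire Om (lbaire Om inf_hi) x).

Lemma Hcont_lo_le_Hsup f x : F f -> Hcont Om f -> Om x -> ((f x).1 <= (Hsup x).1)%E.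
Proof.
move=> Ff /HcontP[_ fE] Ox; rewrite -(fE x Ox).1; apply: lbaire_mono => y Oy /=.
rewrite -(fE y Oy).2; by apply: ubaire_mono => z _; apply: ereal_sup_ubound; exists f.
Qed.

Lemma Hcont_hi_ge_Hinf f x : F f -> Hcont Om f -> Om x -> ((Hinf x).2 <= (f x).2)%E.
Proof.
move=> Ff /HcontP[_ fE] Ox; rewrite -(fE x Ox).2; apply: ubaire_mono => y Oy /=.
rewrite -(fE y Oy).1; by apply: lbaire_mono => z _; apply: ereal_inf_lbound; exists f.
Qed.

Hypothesis FH : F `<=` Hcont Om.

Lemma Hsup_Hcont : Hcont Om Hsup.
Proof.
apply: Hcont_lbaire_ubaire => x Ox; apply: ge_ereal_sup => _ [f Ff <-].
exact: Hcont_lo_le_Hsup (FH Ff) Ox.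
Qed.

Lemma Hinf_Hcont : Hcont Om Hinf.
Proof.
apply: Hcont_ubaire_lbaire => x Ox; apply: le_ereal_inf_tmp => _ [f Ff <-].
exact: Hcont_hi_ge_Hinf (FH Ff) Ox.
Qed.

Lemma Hsup_ub f : F f -> ile Om f Hsup.
Proof.
move=> Ff x Ox; split; first exact: Hcont_lo_le_Hsup (FH Ff) Ox.
have /HcontP[_ fE] := FH Ff; rewrite -(fE x Ox).2.
by apply: ubaire_mono => y _; apply: ereal_sup_ubound; exists f.
Qed.

Lemma Hinf_lb f : F f -> ile Om Hinf f.
Proof.
move=> Ff x Ox; split; last exact: Hcont_hi_ge_Hinf (FH Ff) Ox.
have /HcontP[_ fE] := FH Ff; rewrite -(fE x Ox).1.
by apply: lbaire_mono => y _; apply: ereal_inf_lbound; exists f.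
Qed.

Lemma Hsup_least w : Hcont Om w -> (forall f, F f -> ile Om f w) -> ile Om Hsup w.
Proof.
move=> /HcontP[_ wE] Fw.
have ubaire_le y : Om y -> (ubaire Om sup_lo y <= (w y).2)%E.
  move=> Oy; rewrite -(wE y Oy).2; apply: ubaire_mono => z Oz.
  by apply: ge_ereal_sup => _ [f Ff <-]; case: (Fw f Ff z Oz).
move=> x Ox; split; last exact: ubaire_le.
by rewrite -(wE x Ox).1; apply: lbaire_mono.
Qed.

Lemma Hinf_greatest w : Hcont Om w -> (forall f, F f -> ile Om w f) -> ile Om w Hinf.
Proof.
move=> /HcontP[_ wE] Fw.
have lbaire_ge y : Om y -> ((w y).1 <= lbaire Om inf_hi y)%E.
  move=> Oy; rewrite -(wE y Oy).1; apply: lbaire_mono => z Oz.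
  by apply: le_ereal_inf_tmp => _ [f Ff <-]; case: (Fw f Ff z Oz).
move=> x Ox; split; first exact: lbaire_ge.
by rewrite -(wE x Ox).2; apply: ubaire_mono.
Qed.

End SupInf.

Lemma Hsup_is_sup (R : realType) (n : nat) (Om : set 'rV[R]_n) F f0 w :
  F f0 -> F `<=` Hnf Om -> Hnf Om w -> (forall f, F f -> ile Om f w) ->
  is_sup_Hnf Om F (Hsup Om F).
Proof.
move=> Ff0 FH [Hw nfw] Fw; have FHc : F `<=` Hcont Om by move=> f /FH[].
have HsupH := Hsup_Hcont FHc.
split; [split=> // | exact: Hsup_ub | by move=> w' [Hw' _]; exact: Hsup_least].
apply: nearly_finite_between (FH f0 Ff0).2 nfw HsupH.1 _ (Hsup_least Hw Fw).
exact: Hsup_ub.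
Qed.

Lemma Hinf_is_inf (R : realType) (n : nat) (Om : set 'rV[R]_n) F f0 w :
  F f0 -> F `<=` Hnf Om -> Hnf Om w -> (forall f, F f -> ile Om w f) ->
  is_inf_Hnf Om F (Hinf Om F).
Proof.
move=> Ff0 FH [Hw nfw] Fw; have FHc : F `<=` Hcont Om by move=> f /FH[].
have HinfH := Hinf_Hcont FHc.
split; [split=> // | exact: Hinf_lb | by move=> w' [Hw' _]; exact: Hinf_greatest].
apply: nearly_finite_between nfw (FH f0 Ff0).2 HinfH.1 (Hinf_greatest Hw Fw) _.
exact: Hinf_lb.
Qed.

Theorem theorem24 (R : realType) (n : nat) (Om : set 'rV[R]_n) :
  open Om ->
  (forall F : set (ifun R n), F !=set0 -> F `<=` Hnf Om ->
     (exists2 w, Hnf Om w & forall f, F f -> ile Om f w) ->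
     exists u, is_sup_Hnf Om F u) /\
  (forall F : set (ifun R n), F !=set0 -> F `<=` Hnf Om ->
     (exists2 w, Hnf Om w & forall f, F f -> ile Om w f) ->
     exists v, is_inf_Hnf Om F v).
Proof.
(* The argument works for an arbitrary set [Om]. *)
move=> _; split=> F [f0 Ff0] FH [w Hw Fw].
- by exists (Hsup Om F); exact: Hsup_is_sup Ff0 FH Hw Fw.
- by exists (Hinf Om F); exact: Hinf_is_inf Ff0 FH Hw Fw.
Qed.
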